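(* For all partial Boolean functions $f:D\to\{0,1\}$ with $D\subseteq\{0,1\}^n$, we have $\mathrm{QS}(f)\le \mathrm{Q}(f)$.
   Context: Query model: for $x\in\{0,1\}^n$ the oracle $O_x$ acts by $O_x|i,b\rangle=|i,b\oplus x_i\rangle$. A $T$-query quantum algorithm applies input-independent unitaries $U_0,\dots,U_T$ interleaved with $O_x$ to $|0^m\rangle$, producing $|\psi_x\rangle=U_TO_x\cdots O_xU_0|0^m\rangle$. It then either measures the first qubit to produce an output bit, or outputs the mixed state obtained by tracing out a fixed subset of qubits. The trace distance is $\|\rho-\sigma\|_{tr}=\tfrac12\|\rho-\sigma\|_1$. $\mathrm{Q}(f)$ is the minimum $T$ such that some $T$-query algorithm outputs $f(x)$ with probability at least $2/3$ for every $x\in D$. $\mathrm{QS}(f)$ is the smallest $k$ such that some $k$-query algorithm outputs states $\rho_x$ ($x\in D$) with $\|\rho_x-\rho_y\|_{tr}\ge 1/6$ whenever $x,y\in D$ and $f(x)\ne f(y)$. *)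

From HB Require Import structures.
From mathcomp Require Import all_boot all_order all_algebra.
From mathcomp Require Import sesquilinear spectral algC.

Set Implicit Arguments.
Unset Strict Implicit.
Unset Printing Implicit Defensive.

Import Order.TTheory GRing.Theory Num.Theory Num.Def.
Local Open Scope ring_scope.

Definition adjmx (m p : nat) (A : 'M[algC]_(m, p)) : 'M[algC]_(p, m) :=
  map_mx conjC A^T.

(* ||A||_1 = tr sqrt(A^* A) = sum of singular values of A, i.e. sum of the
   square roots of the eigenvalues of A^* A (a normal matrix, diagonalized by
   the library's spectral decomposition). *)
Definition trnorm (d : nat) (A : 'M[algC]_d) : algC :=
  \sum_(i < d) sqrtC (spectral_diag (adjmx A *m A) 0 i).

Definition trdist (d : nat) (rho sigma : 'M[algC]_d) : algC :=
  trnorm (rho - sigma) / 2%:R.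

(* Computational basis of the state space of an algorithm with workspace of
   dimension w: (output qubit, (query index i, query bit b), workspace). *)
Definition basis (n w : nat) : finType := (bool * ('I_n * bool) * 'I_w)%type.

Definition dimS (n w : nat) : nat := #|basis n w|.

Definition ket (n w : nat) (s : basis n w) : 'cV[algC]_(dimS n w) :=
  delta_mx (enum_rank s) 0.

Definition oflip (n w : nat) (x : {ffun 'I_n -> bool}) (s : basis n w)
  : basis n w :=
  let: (o, (i, b), z) := s in (o, (i, b (+) x i), z).

Definition oracle (n w : nat) (x : {ffun 'I_n -> bool}) : 'M[algC]_(dimS n w) :=
  \matrix_(r, c) ((enum_val r == oflip x (enum_val c))%:R).

(* A T-query algorithm: workspace dimension, initial basis state |0^m>,
   and input-independent unitaries U_0, ..., U_T. *)
Record qalg (n T : nat) := QAlg {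
  qa_w : nat;
  qa_init : basis n qa_w;
  qa_U : nat -> 'M[algC]_(dimS n qa_w);
  qa_unitary : forall j, (j <= T)%N -> qa_U j \is unitarymx
}.

Fixpoint run_upto (n w : nat) (U : nat -> 'M[algC]_(dimS n w))
    (s0 : basis n w) (x : {ffun 'I_n -> bool}) (k : nat) : 'cV[algC]_(dimS n w) :=
  match k with
  | 0 => U 0%N *m ket s0
  | k'.+1 => U k *m (oracle w x *m run_upto U s0 x k')
  end.

Definition final_state (n T : nat) (A : qalg n T) (x : {ffun 'I_n -> bool}) :=
  run_upto (@qa_U n T A) (qa_init A) x T.

Definition out_prob (n T : nat) (A : qalg n T) (x : {ffun 'I_n -> bool})
    (v : bool) : algC :=
  \sum_(s : basis n (qa_w A) | s.1.1 == v)
     `|final_state A x (enum_rank s) 0| ^+ 2.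

Definition computes (n T : nat) (A : qalg n T)
    (D : {set {ffun 'I_n -> bool}}) (f : {ffun 'I_n -> bool} -> bool) : Prop :=
  forall x, x \in D -> 2%:R / 3%:R <= out_prob A x (f x).

(* Reduced state obtained from |psi><psi| by tracing out the E part of a
   decomposition of the basis as K x E (given by a bijection e with inverse g).
   Tracing out a fixed subset of qubits is such a decomposition. *)
Definition reduced_state (d : nat) (K E : finType) (g : K * E -> 'I_d)
    (psi : 'cV[algC]_d) : 'M[algC]_#|K| :=
  \matrix_(a, a') \sum_(eps : E)
     psi (g (enum_val a, eps)) 0 * (psi (g (enum_val a', eps)) 0)^*.

(* A k-query state-generating algorithm: an algorithm together with the
   subsystem decomposition that is traced out. *)
Record qsalg (n T : nat) := QSAlg {
  qs_alg : qalg n T;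
  qs_K : finType;
  qs_E : finType;
  qs_split : basis n (qa_w qs_alg) -> qs_K * qs_E;
  qs_join : qs_K * qs_E -> basis n (qa_w qs_alg);
  qs_splitK : cancel qs_split qs_join;
  qs_joinK : cancel qs_join qs_split
}.

Definition out_state (n T : nat) (B : qsalg n T) (x : {ffun 'I_n -> bool}) :
    'M[algC]_#|qs_K B| :=
  @reduced_state _ (qs_K B) (qs_E B) (fun p => enum_rank (@qs_join n T B p))
    (final_state (qs_alg B) x).

Definition separates (n T : nat) (B : qsalg n T)
    (D : {set {ffun 'I_n -> bool}}) (f : {ffun 'I_n -> bool} -> bool) : Prop :=
  forall x y, x \in D -> y \in D -> f x != f y ->
    1 / 6%:R <= trdist (out_state B x) (out_state B y).

From mathcomp Require Import all_boot all_order all_algebra.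
From mathcomp Require Import sesquilinear spectral algC.
From mathcomp Require Import ring.

Set Implicit Arguments.
Unset Strict Implicit.
Unset Printing Implicit Defensive.

Import Order.TTheory GRing.Theory Num.Theory.
Local Open Scope ring_scope.

(* Run the algorithm computing f and keep only its output qubit.  The reduced
   state is a 2x2 density matrix whose diagonal is the output distribution.
   For f x <> f y the difference M of the two states is Hermitian and
   traceless, so M^* M is the scalar |M_bb|^2 + |M_bb'|^2 and the trace
   distance is its square root, at least |M_bb| = |p_x(b) - p_y(b)|.  For
   b = f x this is at least 2/3 - 1/3, as p_y(b) = 1 - p_y(f y). *)

Definition sqnorm d (v : 'cV[algC]_d) : algC := \sum_i `|v i 0| ^+ 2.

Lemma sqnormE d (v : 'cV[algC]_d) : sqnorm v = (adjmx v *m v) 0 0.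
Proof. by rewrite /sqnorm mxE; apply: eq_bigr => i _; rewrite !mxE normCK mulrC. Qed.

Lemma sqnorm_unitary d (U : 'M[algC]_d) (v : 'cV[algC]_d) :
  U \is unitarymx -> sqnorm (U *m v) = sqnorm v.
Proof.
move=> /unitarymxP/mulmx1C adjUU.
by rewrite !sqnormE /adjmx trmx_mul map_mxM -mulmxA (mulmxA _ U) adjUU mul1mx.
Qed.

Lemma sqnorm_ket n w (s : basis n w) : sqnorm (ket s) = 1.
Proof.
rewrite /sqnorm (bigD1 (enum_rank s)) //= big1 ?addr0.
  by rewrite !mxE !eqxx normr1 expr1n.
by move=> i /negbTE neq_is; rewrite !mxE neq_is normr0 expr0n.
Qed.

Lemma oflipK n w (x : {ffun 'I_n -> bool}) : involutive (@oflip n w x).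
Proof. by case=> [[o [i b]] z]; rewrite /= addbK. Qed.

Lemma oracle_mulmxE n w x (v : 'cV[algC]_(dimS n w)) r :
  (oracle w x *m v) r 0 = v (enum_rank (oflip x (enum_val r))) 0.
Proof.
rewrite mxE (bigD1 (enum_rank (oflip x (enum_val r)))) //= big1 ?addr0.
  by rewrite mxE enum_rankK oflipK eqxx mul1r.
move=> c neq_c; rewrite mxE; case: eqP => [r_flip|_]; last by rewrite mul0r.
by move: neq_c; rewrite r_flip oflipK enum_valK eqxx.
Qed.

Lemma sqnorm_oracle n w x (v : 'cV[algC]_(dimS n w)) :
  sqnorm (oracle w x *m v) = sqnorm v.
Proof.
rewrite /sqnorm; under eq_bigr do rewrite oracle_mulmxE.
have flip_inj : injective (fun r : 'I_(dimS n w) => enum_rank (oflip x (enum_val r))).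
  by move=> r1 r2 /enum_rank_inj /(can_inj (oflipK x)) /enum_val_inj.
by rewrite [RHS](reindex_inj flip_inj).
Qed.

Lemma sqnorm_run_upto n w (U : nat -> 'M[algC]_(dimS n w)) s0 x k :
  (forall j, (j <= k)%N -> U j \is unitarymx) -> sqnorm (run_upto U s0 x k) = 1.
Proof.
elim: k => [|k IHk] U_unitary /=; first by rewrite sqnorm_unitary ?sqnorm_ket ?U_unitary.
rewrite sqnorm_unitary ?U_unitary // sqnorm_oracle IHk // => j le_jk.
by rewrite U_unitary ?leqW.
Qed.

Lemma sqnorm_final_state n T (A : qalg n T) x : sqnorm (final_state A x) = 1.
Proof. exact/sqnorm_run_upto/qa_unitary. Qed.

Section ReducedState.

Variables (d : nat) (K E : finType) (g : K * E -> 'I_d) (psi : 'cV[algC]_d).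

Lemma reduced_state_adj : adjmx (reduced_state g psi) = reduced_state g psi.
Proof.
apply/matrixP => a a'; rewrite !mxE rmorph_sum; apply: eq_bigr => eps _.
by rewrite rmorphM /= conjCK mulrC.
Qed.

Lemma reduced_state_diag a :
  reduced_state g psi a a = \sum_eps `|psi (g (enum_val a, eps)) 0| ^+ 2.
Proof. by rewrite mxE; apply: eq_bigr => eps _; rewrite normCK. Qed.

Lemma tr_reduced_state : bijective g -> \tr (reduced_state g psi) = sqnorm psi.
Proof.
move=> g_bij; rewrite /mxtrace; under eq_bigr do rewrite reduced_state_diag.
rewrite (reindex enum_rank) /=; last by apply: onW_bij; exact: enum_rank_bij.
under eq_bigr do rewrite enum_rankK.
rewrite pair_big /sqnorm (reindex g) /=; last by apply: onW_bij.
by apply: eq_big => [[a eps]|[a eps] _].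
Qed.

End ReducedState.

Lemma out_state_adj n T (B : qsalg n T) x : adjmx (out_state B x) = out_state B x.
Proof. exact: reduced_state_adj. Qed.

Lemma tr_out_state n T (B : qsalg n T) x : \tr (out_state B x) = 1.
Proof.
rewrite tr_reduced_state ?sqnorm_final_state //.
exists (fun i => @qs_split n T B (enum_val i)) => p; first by rewrite enum_rankK qs_joinK.
by rewrite qs_splitK enum_valK.
Qed.

Lemma trnorm_scalar_gram d (A : 'M[algC]_d) c :
  adjmx A *m A = c%:M -> trnorm A = d%:R * sqrtC c.
Proof.
move=> gramA; rewrite /trnorm gramA.
have /orthomx_spectralP cE : (c%:M : 'M[algC]_d) \is normalmx.
  by apply/normalmxP; rewrite scalar_mxC.
have P_unit := spectral_unit (c%:M : 'M[algC]_d).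
set P := spectralmx _ in cE P_unit; set sp := spectral_diag _ in cE *.
have sp_c : diag_mx sp = c%:M.
  have := congr1 (fun M => P *m M *m invmx P) cE.
  rewrite !mulmxA (mulmxV P_unit) mul1mx -(mulmxA _ P) (mulmxV P_unit) mulmx1 => <-.
  by rewrite scalar_mxC -mulmxA (mulmxV P_unit) mulmx1.
under eq_bigr => i _ do
  [move/matrixP: sp_c => /(_ i i); rewrite !mxE eqxx mulr1n => ->].
by rewrite sumr_const card_ord mulr_natl.
Qed.

Lemma hermitian_conj d (M : 'M[algC]_d) i j : adjmx M = M -> (M i j)^* = M j i.
Proof. by move/matrixP => /(_ j i); rewrite !mxE. Qed.

Local Notation rk := (@enum_rank (bool : finType)).

Lemma mxtrace_qubit (M : 'M[algC]_#|(bool : finType)|) b :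
  \tr M = M (rk b) (rk b) + M (rk (~~ b)) (rk (~~ b)).
Proof.
rewrite /mxtrace (reindex rk) /=; last by apply: onW_bij; exact: enum_rank_bij.
by rewrite big_bool; case: b; rewrite // addrC.
Qed.

(* For a Hermitian M the Gram matrix is M *m M, and Cayley-Hamilton for a
   traceless 2x2 matrix makes M *m M scalar. *)
Lemma gram_traceless_qubit (M : 'M[algC]_#|(bool : finType)|) b :
  adjmx M = M -> \tr M = 0 ->
  adjmx M *m M = (`|M (rk b) (rk b)| ^+ 2 + `|M (rk b) (rk (~~ b))| ^+ 2)%:M.
Proof.
move=> adjM trM.
have Mnn : M (rk (~~ b)) (rk (~~ b)) = - M (rk b) (rk b).
  by apply/eqP; rewrite -addr_eq0 addrC -(mxtrace_qubit M b) trM.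
rewrite adjM; apply/matrixP => i j; rewrite -(enum_valK i) -(enum_valK j).
rewrite !mxE (reindex rk) /=; last by apply: onW_bij; exact: enum_rank_bij.
rewrite big_bool !normCK !(hermitian_conj _ _ adjM) (inj_eq enum_rank_inj).
by case: b Mnn; case: (enum_val i); case: (enum_val j) => /= Mnn;
  rewrite ?Mnn ?mulr1n ?mulr0n; ring.
Qed.

Lemma trdist_qubit_ge (rho sigma : 'M[algC]_#|(bool : finType)|) b :
  adjmx rho = rho -> adjmx sigma = sigma -> \tr rho = \tr sigma ->
  `|rho (rk b) (rk b) - sigma (rk b) (rk b)| <= trdist rho sigma.
Proof.
move=> adj_rho adj_sigma tr_eq; set M := rho - sigma.
have adjM : adjmx M = M.
  apply/matrixP => i j; rewrite !mxE rmorphB /=.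
  by rewrite (hermitian_conj _ _ adj_rho) (hermitian_conj _ _ adj_sigma).
have trM : \tr M = 0 by rewrite /M raddfB /= tr_eq subrr.
rewrite /trdist (trnorm_scalar_gram (gram_traceless_qubit b adjM trM)).
have -> : #|(bool : finType)|%:R = 2%:R :> algC by rewrite card_bool.
rewrite mulrAC divff ?pnatr_eq0 // mul1r -[X in X <= _]sqrCK //.
rewrite ler_sqrtC ?nnegrE ?addr_ge0 ?exprn_ge0 //.
by rewrite /M 2!mxE lerDl exprn_ge0.
Qed.

Definition out_qubit_split n w (s : basis n w) : bool * ('I_n * bool * 'I_w) :=
  (s.1.1, (s.1.2, s.2)).

Definition out_qubit_join n w (p : bool * ('I_n * bool * 'I_w)) : basis n w :=
  (p.1, p.2.1, p.2.2).

Lemma out_qubit_splitK n w : cancel (@out_qubit_split n w) (@out_qubit_join n w).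
Proof. by case=> [[o ib] z]. Qed.

Lemma out_qubit_joinK n w : cancel (@out_qubit_join n w) (@out_qubit_split n w).
Proof. by case=> o [ib z]. Qed.

Definition out_qubit_alg n T (A : qalg n T) : qsalg n T :=
  QSAlg (@out_qubit_splitK n (qa_w A)) (@out_qubit_joinK n (qa_w A)).

Lemma out_qubit_state_diag n T (A : qalg n T) x b :
  out_state (out_qubit_alg A) x (rk b) (rk b) = out_prob A x b.
Proof.
rewrite /out_state reduced_state_diag enum_rankK /out_prob.
rewrite (reindex (@out_qubit_join n (qa_w A))) /=; last first.
  by exists (@out_qubit_split n (qa_w A)) => p _; rewrite ?out_qubit_joinK ?out_qubit_splitK.
pose F p := `|final_state A x (enum_rank (@out_qubit_join n (qa_w A) p)) 0| ^+ 2.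
have -> : \sum_eps F (b, eps) = \sum_(o | o == b) \sum_eps F (o, eps).
  by rewrite big_pred1_eq.
by rewrite pair_big; apply: eq_big => [[o e]|[o e] _]; rewrite /= ?andbT.
Qed.

Lemma out_prob_negb n T (A : qalg n T) x b :
  out_prob A x (~~ b) = 1 - out_prob A x b.
Proof.
rewrite -(tr_out_state (out_qubit_alg A) x) (mxtrace_qubit _ b).
by rewrite !out_qubit_state_diag addrC addKr.
Qed.

Lemma two_thirds_gap (p q : algC) :
  2%:R / 3%:R <= p -> 2%:R / 3%:R <= q -> 1 / 6%:R <= `|p - (1 - q)|.
Proof.
move=> p_ge q_ge; have sixth_ge0 : 0 <= 1 / 6%:R :> algC by rewrite divr_ge0.
have gap : 1 / 6%:R <= p - (1 - q).
  rewrite -subr_ge0.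
  have -> : p - (1 - q) - 1 / 6%:R = p - 2%:R / 3%:R + (q - 2%:R / 3%:R) + 1 / 6%:R.
    by field.
  by rewrite addr_ge0 // addr_ge0 ?subr_ge0.
by rewrite ger0_norm // (le_trans sixth_ge0 gap).
Qed.

Theorem proposition6 (n : nat) (D : {set {ffun 'I_n -> bool}})
    (f : {ffun 'I_n -> bool} -> bool) (T : nat) :
  (exists A : qalg n T, computes A D f) ->
  exists (k : nat) (B : qsalg n k), (k <= T)%N /\ separates B D f.
Proof.
case=> A computes_A; set B := out_qubit_alg A.
exists T, B; split=> // x y Dx Dy fxy.
have tr_eq : \tr (out_state B x) = \tr (out_state B y) by rewrite !tr_out_state.
apply: le_trans _ (trdist_qubit_ge (f x) (out_state_adj B x) (out_state_adj B y) tr_eq).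
rewrite !out_qubit_state_diag.
have fy : f y = ~~ f x by move: fxy; case: (f x); case: (f y).
have -> : out_prob A y (f x) = 1 - out_prob A y (f y).
  by rewrite fy out_prob_negb subKr.
exact: two_thirds_gap (computes_A x Dx) (computes_A y Dy).
Qed.
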